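(* There is an absolute constant $C$ such that the following holds. Let $D$ be a positive integer that is not a perfect square and let $1\le j\le 2p$. Then there is a sequence $(\tilde Q_k,V_k)$, $k=0,1,\dots,K$, of reduced forms $\tilde Q_k$ of determinant $D$ and integer $2\times2$ matrices $V_k$ such that: (i) $\tilde Q_0=\tilde I$ and $V_0$ is the identity matrix; (ii) each pair $(\tilde Q_{k+1},V_{k+1})$ is obtained from earlier pairs by a transformation of one of two types. Type I: $\tilde Q_{k+1}$ is the right neighbor of $\tilde Q_k$, $\tilde Q_{k+1}=S_{k+1}^t\tilde Q_kS_{k+1}$, $V_{k+1}=V_kS_{k+1}$, and $\log\|S_{k+1}\|\le\frac12\log D$. Type II: $\tilde Q_{k+1}=\tilde Q_{k_1}\circ\tilde Q_{k_2}$ via a bilinear matrix $B_{k+1}$ for some $0\le k_1,k_2\le k$, $V_{k+1}B_{k+1}=B_0(V_{k_1}\otimes V_{k_2})$, and $\log\|B_{k+1}\|\le C\log D$; (iii) $\tilde Q_K=Q^{(j)}$ and $V_K=L_j$. Moreover the length satisfies $K\le C(\log D)^2$.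
   Context: Forms $[a,2b,c]$ mean $ax_1^2+2bx_1x_2+cx_2^2$ with matrix $\begin{pmatrix} a&b\\ b&c\end{pmatrix}$, determinant $b^2-ac$. Reduced form of determinant $D$: $0<b<\sqrt D$, $\sqrt D-b<|a|<\sqrt D+b$. $\tilde I=[1,2\lambda,\lambda^2-D]$ with $\lambda=\lfloor\sqrt D\rfloor$. The right neighbor of a reduced $Q_1=[a_1,2b_1,c_1]$ is $S^tQ_1S$ with $S=\begin{pmatrix}0&1\\-1&\mu\end{pmatrix}$, $\mu$ the integer with $-\sqrt D-b_1<\mu c_1<-\sqrt D-b_1+|c_1|$. Principal cycle: $Q^{(0)}=\tilde I$, $Q^{(j)}$ the right neighbor of $Q^{(j-1)}$, $S^{(j)}$ the corresponding matrix, $L_j=S^{(1)}\cdots S^{(j)}$; $2p$ is the least positive period of $(Q^{(j)})$. $B_0=\begin{pmatrix}1&0&0&D-\lambda^2\\0&1&1&2\lambda\end{pmatrix}$. Composition $Q_3=Q_1\circ Q_2$ via a $2\times4$ integer matrix $B$: $(x^tQ_1x)(y^tQ_2y)=z^tB^tQ_3Bz$ identically with $z=(x_1y_1,x_1y_2,x_2y_1,x_2y_2)^t$, $B$ unimodular (six $2\times2$ minors $\Delta_{ik}$, columns $i<k$, with gcd 1) and oriented ($a_1\Delta_{12}>0$, $a_2\Delta_{13}>0$, $a_i$ the leading coefficient of $Q_i$). $\otimes$ is the Kronecker product; $\|M\|$ is the maximal absolute value of the entries. Logarithms: $\log x=\log_2|x|$ if $|x|\ge4$, and $\log x=2$ if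 $|x|<4$. *)

From Stdlib Require Import Reals.
From mathcomp Require Import all_boot all_algebra.

Set Implicit Arguments.
Unset Strict Implicit.
Unset Printing Implicit Defensive.
Import GRing.Theory Num.Theory.
Local Open Scope ring_scope.

Definition int2R (z : int) : R :=
  match z with Posz n => INR n | Negz n => Ropp (INR n.+1) end.

Definition mx2 (a b c d : int) : 'M[int]_2 :=
  \matrix_(i < 2, j < 2)
    if val i == 0%N then (if val j == 0%N then a else b)
    else (if val j == 0%N then c else d).

(* a form [a,2b,c] is its symmetric matrix ((a b) (b c)) *)
Definition fa (Q : 'M[int]_2) : int := Q ord0 ord0.
Definition fb (Q : 'M[int]_2) : int := Q ord0 ord_max.
Definition fc (Q : 'M[int]_2) : int := Q ord_max ord_max.
Definition is_form (Q : 'M[int]_2) : Prop := Q ord0 ord_max = Q ord_max ord0.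

Definition fdet (Q : 'M[int]_2) : int := fb Q ^+ 2 - fa Q * fc Q.

Definition sqrtD (D : nat) : R := sqrt (INR D).

Definition reduced (D : nat) (Q : 'M[int]_2) : Prop :=
  is_form Q /\
  Rlt R0 (int2R (fb Q)) /\ Rlt (int2R (fb Q)) (sqrtD D) /\
  Rlt (Rminus (sqrtD D) (int2R (fb Q))) (Rabs (int2R (fa Q))) /\
  Rlt (Rabs (int2R (fa Q))) (Rplus (sqrtD D) (int2R (fb Q))).

Definition reduced_det (D : nat) (Q : 'M[int]_2) : Prop :=
  reduced D Q /\ fdet Q = (D%:Z).

Definition nbr_mat (mu : int) : 'M[int]_2 := mx2 0 1 (-1) mu.

Definition right_nbr (D : nat) (Q1 S Q2 : 'M[int]_2) : Prop :=
  exists mu : int,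
    S = nbr_mat mu /\
    Rlt (Rminus (Ropp (sqrtD D)) (int2R (fb Q1))) (int2R (mu * fc Q1)) /\
    Rlt (int2R (mu * fc Q1))
        (Rplus (Rminus (Ropp (sqrtD D)) (int2R (fb Q1))) (Rabs (int2R (fc Q1)))) /\
    Q2 = S^T *m Q1 *m S.

Definition lam (D : nat) : nat := Nat.sqrt D.

Definition Itilde (D : nat) : 'M[int]_2 :=
  mx2 1 (lam D)%:Z (lam D)%:Z ((lam D)%:Z ^+ 2 - D%:Z).

(* (Qs j) = Q^(j), (Ss j) = S^(j) (j >= 1) *)
Definition principal_cycle (D : nat) (Qs Ss : nat -> 'M[int]_2) : Prop :=
  Qs 0%N = Itilde D /\ forall j : nat, right_nbr D (Qs j) (Ss j.+1) (Qs j.+1).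

Definition least_period (Qs : nat -> 'M[int]_2) (q : nat) : Prop :=
  (0 < q)%N /\ (forall n : nat, Qs (n + q)%N = Qs n) /\
  forall q' : nat, (0 < q')%N -> (q' < q)%N ->
    ~ (forall n : nat, Qs (n + q')%N = Qs n).

Fixpoint Lmat (Ss : nat -> 'M[int]_2) (j : nat) : 'M[int]_2 :=
  match j with 0%N => 1%:M | j'.+1 => Lmat Ss j' *m Ss j'.+1 end.

Definition B0 (D : nat) : 'M[int]_(2, 4) :=
  \matrix_(i < 2, j < 4)
    nth 0 (if val i == 0%N then [:: 1; 0; 0; D%:Z - (lam D)%:Z ^+ 2]
           else [:: 0; 1; 1; 2 * (lam D)%:Z]) j.

(* Kronecker product, index (i,k) of 'I_2 x 'I_2 <-> 2 i + k of 'I_4 *)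
Definition kron (A B : 'M[int]_2) : 'M[int]_4 :=
  \matrix_(r0 < 4, s0 < 4)
    (A (inord (r0 %/ 2)%N) (inord (s0 %/ 2)%N) * B (inord (r0 %% 2)%N) (inord (s0 %% 2)%N)).

Definition qf (Q : 'M[int]_2) (x : 'cV[int]_2) : int := (x^T *m Q *m x) ord0 ord0.

Definition zvec (x y : 'cV[int]_2) : 'cV[int]_4 :=
  \col_(r0 < 4) (x (inord (r0 %/ 2)%N) ord0 * y (inord (r0 %% 2)%N) ord0).

(* minor Delta_{ik} of the columns i, k (0-indexed here) *)
Definition minor (B : 'M[int]_(2, 4)) (i k : nat) : int :=
  B ord0 (inord i) * B ord_max (inord k) - B ord0 (inord k) * B ord_max (inord i).

Definition unimodular (B : 'M[int]_(2, 4)) : Prop :=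
  foldr gcdz 0 [:: minor B 0 1; minor B 0 2; minor B 0 3;
                   minor B 1 2; minor B 1 3; minor B 2 3] = 1.

Definition oriented (Q1 Q2 : 'M[int]_2) (B : 'M[int]_(2, 4)) : Prop :=
  0 < fa Q1 * minor B 0 1 /\ 0 < fa Q2 * minor B 0 2.

Definition composition (Q1 Q2 Q3 : 'M[int]_2) (B : 'M[int]_(2, 4)) : Prop :=
  (forall x y : 'cV[int]_2, qf Q1 x * qf Q2 y = qf Q3 (B *m zvec x y)) /\
  unimodular B /\ oriented Q1 Q2 B.

Definition normM (m n : nat) (M : 'M[int]_(m, n)) : nat :=
  (\max_(i < m) \max_(j < n) `|M i j|)%N.

Definition plog (x : R) : R :=
  if Rle_dec (INR 4) (Rabs x) then Rdiv (ln (Rabs x)) (ln (INR 2)) else INR 2.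

Definition typeI (D : nat) (Qt V : nat -> 'M[int]_2) (k : nat) : Prop :=
  exists S : 'M[int]_2,
    right_nbr D (Qt k) S (Qt k.+1) /\ V k.+1 = V k *m S /\
    Rle (plog (INR (normM S))) (Rmult (Rinv (INR 2)) (plog (INR D))).

Definition typeII (C : R) (D : nat) (Qt V : nat -> 'M[int]_2) (k : nat) : Prop :=
  exists (k1 k2 : nat) (B : 'M[int]_(2, 4)),
    (k1 <= k)%N /\ (k2 <= k)%N /\
    composition (Qt k1) (Qt k2) (Qt k.+1) B /\
    V k.+1 *m B = B0 D *m kron (V k1) (V k2) /\
    Rle (plog (INR (normM B))) (Rmult C (plog (INR D))).

(* Every form Q^(n) of the principal cycle is L_n^t Itilde L_n with det L_n = 1, and B0 expresses
   Itilde o Itilde = Itilde (multiplication in Z[sqrt D]).  Hence Q^(a) o Q^(b) = Q^(c) for all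
   a, b, c, via adj(L_c) B0 (L_a (x) L_b), which is automatically unimodular and oriented; the only
   issue is its size.  Let A_n = |x + y (lam + sqrt D)| for the first column (x, y) of L_n.
   Reducedness of Q^(n) gives A_n < A_(n+1) < 2 sqrt D A_n and bounds both real embeddings of the
   columns of L_n, so that the composition matrix of Q^(a) o Q^(a) = Q^(c) has entries at most 24 D^2
   as soon as A_a^2 <= A_c <= 4 D A_a^2.  Taking for a the last index with A_a^2 <= A_c halves
   log A at each step; starting from c = j, where log A_j = O(D^3) because the period is O(D^2),
   the index 0 is reached after O(log D) steps.  Read backwards, this is a chain of type II steps
   from Itilde to Q^(j). *)

From Stdlib Require Import Reals Lra Lia Psatz.
From mathcomp Require Import all_boot all_algebra zify ssrZ.
From mathcomp.algebra_tactics Require ring.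
Import GRing.Theory Num.Theory.

Set Implicit Arguments.
Unset Strict Implicit.
Unset Printing Implicit Defensive.

Local Open Scope ring_scope.
Delimit Scope R_scope with Re.

Section IntegerMatrices.
Import mathcomp.algebra_tactics.ring.

Lemma ord1P (j : 'I_1) : j = ord0. Proof. by apply: val_inj; case: j => [[|]]. Qed.

Lemma ord2P (i : 'I_2) : i = ord0 \/ i = ord_max.
Proof. case: i => [[|[|k]] Hk]; [left|right|by []]; exact: val_inj. Qed.

Lemma ord4P (i : 'I_4) : [\/ i = inord 0, i = inord 1, i = inord 2 | i = inord 3].
Proof.
case: i => [[|[|[|[|k]]]] Hk];
  [constructor 1|constructor 2|constructor 3|constructor 4|by []];
  by apply: val_inj; rewrite /= inordK.
Qed.

Lemma inord0_2 : (inord 0 : 'I_2) = ord0. Proof. by apply: val_inj; rewrite /= inordK. Qed.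
Lemma inord1_2 : (inord 1 : 'I_2) = ord_max. Proof. by apply: val_inj; rewrite /= inordK. Qed.

Lemma sum2 (F : 'I_2 -> int) : \sum_(i < 2) F i = F ord0 + F ord_max.
Proof. by rewrite big_ord_recl big_ord1; congr (_ + F _); apply: val_inj. Qed.

Lemma sum4 (F : 'I_4 -> int) :
  \sum_(i < 4) F i = F (inord 0) + F (inord 1) + F (inord 2) + F (inord 3).
Proof.
rewrite big_ord_recl big_ord_recl big_ord_recl big_ord1 !addrA.
by congr (F _ + F _ + F _ + F _); apply: val_inj; rewrite /= inordK.
Qed.

Lemma mx2_00 a b c d : mx2 a b c d ord0 ord0 = a. Proof. by rewrite mxE. Qed.
Lemma mx2_01 a b c d : mx2 a b c d ord0 ord_max = b. Proof. by rewrite mxE. Qed.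
Lemma mx2_10 a b c d : mx2 a b c d ord_max ord0 = c. Proof. by rewrite mxE. Qed.
Lemma mx2_11 a b c d : mx2 a b c d ord_max ord_max = d. Proof. by rewrite mxE. Qed.
Definition mx2E := (mx2_00, mx2_01, mx2_10, mx2_11).

Lemma mx2_eta (M : 'M[int]_2) :
  M = mx2 (M ord0 ord0) (M ord0 ord_max) (M ord_max ord0) (M ord_max ord_max).
Proof.
by apply/matrixP => i j; have [->|->] := ord2P i; have [->|->] := ord2P j; rewrite mx2E.
Qed.

Lemma mx2_mul a b c d a' b' c' d' :
  mx2 a b c d *m mx2 a' b' c' d' =
  mx2 (a * a' + b * c') (a * b' + b * d') (c * a' + d * c') (c * b' + d * d').
Proof.
apply/matrixP => i j; rewrite mxE sum2.
by have [->|->] := ord2P i; have [->|->] := ord2P j; rewrite !mx2E.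
Qed.

Lemma mx2_tr a b c d : (mx2 a b c d)^T = mx2 a c b d.
Proof.
by apply/matrixP => i j; rewrite mxE; have [->|->] := ord2P i; have [->|->] := ord2P j;
  rewrite !mx2E.
Qed.

Lemma mx2_1 : (1%:M : 'M[int]_2) = mx2 1 0 0 1.
Proof.
by apply/matrixP => i j; rewrite mxE; have [->|->] := ord2P i; have [->|->] := ord2P j;
  rewrite mx2E.
Qed.

Lemma det_mx2 a b c d : \det (mx2 a b c d) = a * d - b * c.
Proof.
rewrite (expand_det_row _ ord0) sum2 /cofactor !det_mx11 !mxE /=.
by rewrite !expr0 !expr1 !mul1r; ring.
Qed.

Lemma adj_mx2 a b c d : \adj (mx2 a b c d) = mx2 d (- b) (- c) a.
Proof.
apply/matrixP => i j; rewrite mxE /cofactor det_mx11 !mxE.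
by have [->|->] := ord2P i; have [->|->] := ord2P j; rewrite /= ?expr0 ?expr1 ?expr2 /=;
  ring.
Qed.

Lemma det_adj_mx2 (L : 'M[int]_2) : \det (\adj L) = \det L.
Proof. by rewrite (mx2_eta L) adj_mx2 !det_mx2; ring. Qed.

Definition cv2 (a b : int) : 'cV[int]_2 := \col_(i < 2) (if val i == 0%N then a else b).
Definition cv4 (z0 z1 z2 z3 : int) : 'cV[int]_4 := \col_(i < 4) nth 0 [:: z0; z1; z2; z3] i.

Lemma cv2_0 a b : cv2 a b ord0 ord0 = a. Proof. by rewrite mxE. Qed.
Lemma cv2_1 a b : cv2 a b ord_max ord0 = b. Proof. by rewrite mxE. Qed.
Lemma cv4_0 a b c d : cv4 a b c d (inord 0) ord0 = a. Proof. by rewrite mxE inordK. Qed.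
Lemma cv4_1 a b c d : cv4 a b c d (inord 1) ord0 = b. Proof. by rewrite mxE inordK. Qed.
Lemma cv4_2 a b c d : cv4 a b c d (inord 2) ord0 = c. Proof. by rewrite mxE inordK. Qed.
Lemma cv4_3 a b c d : cv4 a b c d (inord 3) ord0 = d. Proof. by rewrite mxE inordK. Qed.
Definition cvE := (cv2_0, cv2_1, cv4_0, cv4_1, cv4_2, cv4_3).

Lemma cv2_eta (x : 'cV[int]_2) : x = cv2 (x ord0 ord0) (x ord_max ord0).
Proof. by apply/matrixP => i j; rewrite (ord1P j); have [->|->] := ord2P i; rewrite cvE. Qed.

Lemma mx2_mulv a b c d u v : mx2 a b c d *m cv2 u v = cv2 (a * u + b * v) (c * u + d * v).
Proof.
apply/matrixP => i j; rewrite (ord1P j) mxE sum2.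
by have [->|->] := ord2P i; rewrite !mx2E !cvE.
Qed.

Lemma col_mulv10 (L : 'M[int]_2) : L *m cv2 1 0 = cv2 (L ord0 ord0) (L ord_max ord0).
Proof. by rewrite {1}(mx2_eta L) mx2_mulv !mulr1 !mulr0 !addr0. Qed.

Lemma qf_mx2 a b c d u v : qf (mx2 a b c d) (cv2 u v) = u * (a * u + b * v) + v * (c * u + d * v).
Proof. by rewrite /qf -mulmxA mx2_mulv !mxE sum2 !mxE. Qed.

Lemma qf_mulmx (L Q : 'M[int]_2) x : qf (L^T *m Q *m L) x = qf Q (L *m x).
Proof. by rewrite /qf trmx_mul !mulmxA. Qed.

Ltac simp_ord := repeat rewrite !inordK //=; rewrite ?inord0_2 ?inord1_2 ?mx2E ?cvE.

Lemma form_eta (Q : 'M[int]_2) : is_form Q -> Q = mx2 (fa Q) (fb Q) (fb Q) (fc Q).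
Proof. by move=> HQ; rewrite {1}(mx2_eta Q) -HQ. Qed.

Lemma fdet_is_form (Q : 'M[int]_2) : is_form Q -> fdet Q = - \det Q.
Proof. by move=> /form_eta E; rewrite [in RHS]E det_mx2 /fdet; ring. Qed.

Lemma is_form_congr (Q S : 'M[int]_2) : is_form Q -> is_form (S^T *m Q *m S).
Proof.
by move=> /form_eta E; rewrite /is_form E (mx2_eta S) mx2_tr !mx2_mul !mx2E; ring.
Qed.

Lemma fdet_congr (Q S : 'M[int]_2) :
  is_form Q -> \det S = 1 -> fdet (S^T *m Q *m S) = fdet Q.
Proof.
move=> HQ HS; rewrite !fdet_is_form //; last exact: is_form_congr.
by rewrite !det_mulmx det_tr HS mulr1 mul1r.
Qed.

Lemma form_eq (Q Q' : 'M[int]_2) : is_form Q -> is_form Q' -> fdet Q = fdet Q' ->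
  fa Q = fa Q' -> fb Q = fb Q' -> fa Q != 0 -> Q = Q'.
Proof.
move=> fQ fQ' Edet Ea Eb a_neq0.
rewrite (form_eta fQ) (form_eta fQ'); congr mx2 => //; apply: (mulfI a_neq0).
by move: Edet; rewrite /fdet Ea Eb => /addrI /oppr_inj.
Qed.

Lemma fdet_Itilde D : fdet (Itilde D) = D%:Z.
Proof. by rewrite /fdet /fa /fb /fc !mx2E; ring. Qed.

Lemma nbr_mat_congr (Q : 'M[int]_2) mu : is_form Q ->
  (nbr_mat mu)^T *m Q *m nbr_mat mu =
  mx2 (fc Q) (- fb Q - mu * fc Q) (- fb Q - mu * fc Q)
      (fa Q + 2 * mu * fb Q + mu ^+ 2 * fc Q).
Proof. by move/form_eta=> ->; rewrite mx2_tr !mx2_mul /fa /fb /fc !mx2E; congr mx2; ring. Qed.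

Lemma det_nbr_mat mu : \det (nbr_mat mu) = 1.
Proof. by rewrite det_mx2; ring. Qed.

Lemma col0_mul_nbr_mat (L : 'M[int]_2) mu : col ord0 (L *m nbr_mat mu) = - col ord_max L.
Proof.
rewrite (mx2_eta L) mx2_mul; apply/matrixP => i j.
by rewrite (ord1P j) !mxE; have [->|->] := ord2P i; rewrite /= ?mx2E; ring.
Qed.

Lemma zvec_cv2 u0 u1 v0 v1 :
  zvec (cv2 u0 u1) (cv2 v0 v1) = cv4 (u0 * v0) (u0 * v1) (u1 * v0) (u1 * v1).
Proof.
apply/matrixP => i j; rewrite (ord1P j) !mxE.
by case: (ord4P i) => ->; rewrite !inordK //= !inordK.
Qed.

Lemma B0_mulv D z0 z1 z2 z3 :
  B0 D *m cv4 z0 z1 z2 z3 =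
  cv2 (z0 + (D%:Z - (lam D)%:Z ^+ 2) * z3) (z1 + z2 + 2 * (lam D)%:Z * z3).
Proof.
apply/matrixP => i j; rewrite (ord1P j) !mxE sum4 !mxE.
by have [->|->] := ord2P i; simp_ord; ring.
Qed.

Lemma kron_zvec (A B : 'M[int]_2) (x y : 'cV[int]_2) :
  kron A B *m zvec x y = zvec (A *m x) (B *m y).
Proof.
rewrite (mx2_eta A) (mx2_eta B) (cv2_eta x) (cv2_eta y) !mx2_mulv !zvec_cv2.
apply/matrixP => i j; rewrite (ord1P j) !mxE sum4 !mxE.
by case: (ord4P i) => ->; simp_ord; ring.
Qed.

Lemma kron_mul A B C E : kron A B *m kron C E = kron (A *m C) (B *m E).
Proof.
rewrite (mx2_eta A) (mx2_eta B) (mx2_eta C) (mx2_eta E) !mx2_mul.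
apply/matrixP => i j; rewrite !mxE sum4 !mxE.
by case: (ord4P i) => ->; case: (ord4P j) => ->; simp_ord; ring.
Qed.

(* [B0] is the multiplication of [x + y (lam + sqrt D)] in Z[sqrt D], and [qf (Itilde D)] its norm. *)
Lemma qf_Itilde_B0 D u v :
  qf (Itilde D) (B0 D *m zvec u v) = qf (Itilde D) u * qf (Itilde D) v.
Proof. by rewrite (cv2_eta u) (cv2_eta v) zvec_cv2 B0_mulv !qf_mx2; ring. Qed.

Definition principal_form D (L : 'M[int]_2) : 'M[int]_2 := L^T *m Itilde D *m L.

Lemma fa_principal_form D L :
  fa (principal_form D L) = qf (Itilde D) (cv2 (L ord0 ord0) (L ord_max ord0)).
Proof.
rewrite -col_mulv10 -qf_mulmx -/(principal_form D L).
by rewrite {2}(mx2_eta (principal_form D L)) qf_mx2 /fa; ring.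
Qed.

Lemma fb_principal_form D L :
  fb (principal_form D L) =
  L ord0 ord0 * L ord0 ord_max
  + (lam D)%:Z * (L ord0 ord0 * L ord_max ord_max + L ord_max ord0 * L ord0 ord_max)
  + ((lam D)%:Z ^+ 2 - D%:Z) * L ord_max ord0 * L ord_max ord_max.
Proof. by rewrite /fb /principal_form (mx2_eta L) mx2_tr !mx2_mul !mx2E; ring. Qed.

Definition compose_mx D (La Lb Lc : 'M[int]_2) : 'M[int]_(2, 4) :=
  \adj Lc *m (B0 D *m kron La Lb).

Lemma compose_mxV D La Lb Lc :
  \det Lc = 1 -> Lc *m compose_mx D La Lb Lc = B0 D *m kron La Lb.
Proof. by move=> H; rewrite mulmxA mul_mx_adj H mul1mx. Qed.

Lemma compose_mx_identity D La Lb Lc x y : \det Lc = 1 ->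
  qf (principal_form D La) x * qf (principal_form D Lb) y =
  qf (principal_form D Lc) (compose_mx D La Lb Lc *m zvec x y).
Proof.
by move=> H; rewrite !qf_mulmx mulmxA compose_mxV // -mulmxA kron_zvec qf_Itilde_B0.
Qed.

Lemma minor_mulmx (N : 'M[int]_2) (M : 'M[int]_(2, 4)) i k :
  minor (N *m M) i k = \det N * minor M i k.
Proof. by rewrite (mx2_eta N) det_mx2 /minor !mxE !sum2 !mx2E; ring. Qed.

Definition kron_minor (K : 'M[int]_4) (j l : nat) : int :=
  K (inord j) (inord 0) * K (inord l) (inord 1) - K (inord l) (inord 0) * K (inord j) (inord 1).

Lemma cauchy_binet_minor01 (M : 'M[int]_(2, 4)) (K : 'M[int]_4) :
  minor (M *m K) 0 1 =
  minor M 0 1 * kron_minor K 0 1 + minor M 0 2 * kron_minor K 0 2 +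
  minor M 0 3 * kron_minor K 0 3 + minor M 1 2 * kron_minor K 1 2 +
  minor M 1 3 * kron_minor K 1 3 + minor M 2 3 * kron_minor K 2 3.
Proof. by rewrite /minor /kron_minor !mxE !sum4; ring. Qed.

Lemma minor01_B0_kron D La Lb :
  minor (B0 D *m kron La Lb) 0 1 = fa (principal_form D La) * \det Lb.
Proof.
rewrite fa_principal_form (mx2_eta La) (mx2_eta Lb) /minor !mxE !sum4 !mxE det_mx2 qf_mx2.
by simp_ord; ring.
Qed.

Lemma minor02_B0_kron D La Lb :
  minor (B0 D *m kron La Lb) 0 2 = fa (principal_form D Lb) * \det La.
Proof.
rewrite fa_principal_form (mx2_eta La) (mx2_eta Lb) /minor !mxE !sum4 !mxE det_mx2 qf_mx2.
by simp_ord; ring.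
Qed.

Lemma foldr_gcdz_dvd (l : seq int) x : x \in l -> (foldr gcdz 0 l %| x)%Z.
Proof.
elim: l => [//|y l IH]; rewrite in_cons => /orP [/eqP ->|/IH]; first exact: dvdz_gcdl.
exact: dvdz_trans (dvdz_gcdr _ _).
Qed.

(* Multiplying on the right by [kron (adj La) (adj Lb)] turns the matrix into [adj Lc *m B0 D],
   whose minor [Delta_12] is [det (adj Lc) * fa (Itilde D) = 1]; by Cauchy-Binet that minor is
   an integer combination of the six minors of the matrix. *)
Lemma compose_mx_unimodular D La Lb Lc :
  \det La = 1 -> \det Lb = 1 -> \det Lc = 1 -> unimodular (compose_mx D La Lb Lc).
Proof.
move=> Ha Hb Hc.
have minor01_1 :
    minor (compose_mx D La Lb Lc *m kron (\adj La) (\adj Lb)) 0 1 = 1.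
  rewrite -!mulmxA kron_mul !mul_mx_adj Ha Hb minor_mulmx det_adj_mx2 Hc mul1r.
  rewrite minor01_B0_kron det1 mulr1 fa_principal_form mx2_1 !mx2E qf_mx2; ring.
rewrite cauchy_binet_minor01 in minor01_1.
rewrite /unimodular; set l := [:: _; _; _; _; _; _].
have : (foldr gcdz 0 l %| 1%R)%Z.
  rewrite -minor01_1.
  by repeat apply: rpredD; apply: dvdz_mulr; apply: foldr_gcdz_dvd; rewrite !inE eqxx ?orbT.
by rewrite dvdz1 /l /= => /eqP; rewrite /gcdz => ->.
Qed.

Lemma compose_mx_oriented D La Lb Lc :
  \det La = 1 -> \det Lb = 1 -> \det Lc = 1 ->
  fa (principal_form D La) != 0 -> fa (principal_form D Lb) != 0 ->
  oriented (principal_form D La) (principal_form D Lb) (compose_mx D La Lb Lc).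
Proof.
move=> Ha Hb Hc /eqP Hfa /eqP Hfb.
rewrite /oriented !minor_mulmx det_adj_mx2 Hc !mul1r minor01_B0_kron minor02_B0_kron Ha Hb.
by rewrite !mulr1; split; nia.
Qed.

Lemma principal_composition D La Lb Lc :
  \det La = 1 -> \det Lb = 1 -> \det Lc = 1 ->
  fa (principal_form D La) != 0 -> fa (principal_form D Lb) != 0 ->
  composition (principal_form D La) (principal_form D Lb) (principal_form D Lc)
    (compose_mx D La Lb Lc).
Proof.
move=> Ha Hb Hc Hfa Hfb; split; first by move=> x y; apply: compose_mx_identity.
by split; [exact: compose_mx_unimodular | exact: compose_mx_oriented].
Qed.

End IntegerMatrices.

Section IntToReal.
Local Open Scope R_scope.

Lemma int2R_IZR z : int2R z = IZR (Z_of_int z).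
Proof.
by case: z => n; rewrite /int2R INR_IZR_INZ ?opp_IZR /Z_of_int; repeat f_equal; lia.
Qed.

Lemma int2RD x y : int2R (x + y)%R = int2R x + int2R y.
Proof. by rewrite !int2R_IZR -plus_IZR; f_equal; lia. Qed.

Lemma int2RM x y : int2R (x * y)%R = int2R x * int2R y.
Proof. by rewrite !int2R_IZR -mult_IZR; f_equal; lia. Qed.

Lemma int2RN x : int2R (- x)%R = - int2R x.
Proof. by rewrite !int2R_IZR -opp_IZR; f_equal; lia. Qed.

Lemma int2RB x y : int2R (x - y)%R = int2R x - int2R y.
Proof. by rewrite int2RD int2RN. Qed.

Lemma int2R_nat n : int2R n%:Z = INR n.
Proof. by []. Qed.

Lemma int2RX2 x : int2R (x ^+ 2)%R = int2R x * int2R x.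
Proof. by rewrite expr2 int2RM. Qed.

Lemma int2R_inj x y : int2R x = int2R y -> x = y.
Proof. by rewrite !int2R_IZR => /eq_IZR; lia. Qed.

Lemma int2R_gt0 x : 0 < int2R x -> (0 < x)%R.
Proof. by rewrite int2R_IZR => /lt_IZR; lia. Qed.

Lemma Rabs_int2R z : Rabs (int2R z) = INR `|z|%N.
Proof. by rewrite int2R_IZR Rabs_Zabs INR_IZR_INZ; f_equal; lia. Qed.

Lemma int2R_eq0_or_ge1 z : int2R z = 0 \/ 1 <= Rabs (int2R z).
Proof.
rewrite Rabs_int2R; case: (posnP `|z|%N) => [/eqP|H]; last by right; apply: (le_INR 1); apply/leP.
by rewrite absz_eq0 => /eqP ->; left.
Qed.

Lemma int2R_abs_le z n : Rabs (int2R z) <= INR n -> (`|z| <= n)%N.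
Proof. by rewrite Rabs_int2R => /INR_le /leP. Qed.

End IntToReal.

Ltac push_int2R :=
  repeat (rewrite int2RB || rewrite int2RD || rewrite int2RM || rewrite int2RN ||
          rewrite int2RX2 || rewrite int2R_nat).

Section RealInequalities.
Local Open Scope R_scope.

Lemma right_nbr_reduced_real (s a b c m : R) :
  0 < s -> b * b - a * c = s * s -> 0 < b -> b < s -> s - b < Rabs a -> Rabs a < s + b ->
  (m = 0 \/ 1 <= Rabs m) -> - s - b < m * c -> m * c < - s - b + Rabs c ->
  0 < - b - m * c /\ - b - m * c < s /\
  s - (- b - m * c) < Rabs c /\ Rabs c < s + (- b - m * c).
Proof.
move=> s_gt0 det_ab b_gt0 b_lt_s a_gt a_lt m_int m_gt m_lt.
have ac_abs : Rabs a * Rabs c = s * s - b * b.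
  by rewrite -Rabs_mult -Rabs_Ropp Rabs_right; nra.
have := Rabs_pos a; have := Rabs_pos c => c_ge0 a_ge0.
have c_lt : Rabs c < s + b by nra.
have m_ge1 : 1 <= Rabs m by case: m_int => [m0|//]; rewrite m0 Rmult_0_l in m_gt m_lt; lra.
have mc_le : Rabs c <= - (m * c).
  by rewrite -(Rabs_left (m * c)) ?Rabs_mult; nra.
by repeat split; lra.
Qed.

Lemma nbr_mu_unique (x c m1 m2 : R) :
  x < m1 * c -> m1 * c < x + Rabs c -> x < m2 * c -> m2 * c < x + Rabs c ->
  (m1 - m2 = 0 \/ 1 <= Rabs (m1 - m2)) -> m1 = m2.
Proof.
move=> lt1 gt1 lt2 gt2 [|m12]; first lra.
have : Rabs ((m1 - m2) * c) < Rabs c by rewrite Rmult_minus_distr_r; apply: Rabs_def1; lra.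
by rewrite Rabs_mult; have := Rabs_pos c; nra.
Qed.

Lemma conjugate_bounds (s a b al al' be be' : R) :
  a = al * al' -> b + s = al' * be -> b - s = al * be' ->
  0 < b -> b < s -> s - b < Rabs a -> Rabs a < s + b -> 1 <= Rabs a ->
  [/\ Rabs al < Rabs be, Rabs be < 2 * s * Rabs al,
      Rabs be' < Rabs al' & Rabs al * Rabs al' < 2 * s].
Proof.
move=> Ea Ebp Ebm b_gt0 b_lt a_gt a_lt a_ge1.
have Fa : Rabs al * Rabs al' = Rabs a by rewrite Ea Rabs_mult.
have Fbp : Rabs al' * Rabs be = b + s by rewrite -Rabs_mult -Ebp Rabs_right //; lra.
have Fbm : Rabs al * Rabs be' = s - b.
  by rewrite -Rabs_mult -Rabs_Ropp Rabs_right; rewrite -Ebm; lra.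
have := Rabs_pos al; have := Rabs_pos al'; have := Rabs_pos be; have := Rabs_pos be'.
move=> be'_ge0 be_ge0 al'_ge0 al_ge0.
have al_gt0 : 0 < Rabs al by apply: Rnot_le_lt => al_le0; nra.
have al'_gt0 : 0 < Rabs al' by apply: Rnot_le_lt => al'_le0; nra.
have Gbe : Rabs be * Rabs a = (b + s) * Rabs al by rewrite -Fa -Fbp; ring.
have Gbe' : Rabs be' * Rabs a = (s - b) * Rabs al' by rewrite -Fa -Fbm; ring.
by split; nra.
Qed.

Lemma cross_bound (s P C x x' y y' : R) : 1 <= s -> 0 < P -> 0 < C ->
  Rabs x <= 4 * s * s * P -> Rabs x' * P <= 4 * s * s ->
  Rabs y <= 2 * s * C -> Rabs y' * C <= 2 * s ->
  P <= 2 * s * C -> C <= 4 * s * s * P ->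
  Rabs (x' * y - x * y') <= 48 * s * s * s * s * s.
Proof.
move=> s_ge1 P_gt0 C_gt0 x_le x'_le y_le y'_le PC CP.
have := Rabs_pos x; have := Rabs_pos x'; have := Rabs_pos y; have := Rabs_pos y'.
move=> y'_ge0 y_ge0 x'_ge0 x_ge0.
have x'y : Rabs x' * Rabs y <= 32 * s * s * s * s * s.
  apply: (Rmult_le_reg_r P) => //.
  have : Rabs x' * P * Rabs y <= 4 * s * s * (2 * s * C) by apply: Rmult_le_compat; nra.
  have : 8 * s * s * s * C <= 8 * s * s * s * (4 * s * s * P).
    by apply: Rmult_le_compat_l => //; nra.
  by nra.
have xy' : Rabs x * Rabs y' <= 16 * s * s * s * s.
  apply: (Rmult_le_reg_r C) => //.
  have : Rabs x * (Rabs y' * C) <= 4 * s * s * P * (2 * s) by apply: Rmult_le_compat; nra.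
  have : 8 * s * s * s * P <= 8 * s * s * s * (2 * s * C).
    by apply: Rmult_le_compat_l => //; nra.
  by nra.
have s4 : s * s * s * s <= s * s * s * s * s by have := pow_le s 4; rewrite /=; nra.
rewrite /Rminus; apply: Rle_trans (Rabs_triang _ _) _.
by rewrite Rabs_Ropp !Rabs_mult; lra.
Qed.

End RealInequalities.

Section SquaringChain.
Local Open Scope R_scope.

Lemma pow_lt_pow_l (x y : R) n : (0 < n)%N -> 0 <= x -> x < y -> x ^ n < y ^ n.
Proof.
case: n => // n _ x_ge0 xy; elim: n => [|n IH]; first by rewrite !pow_1.
rewrite -(tech_pow_Rmult x) -(tech_pow_Rmult y).
by apply: Rmult_le_0_lt_compat => //; apply: pow_le.
Qed.

Variables (A : nat -> R) (r : R).
Hypothesis A0 : A 0%N = 1.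
Hypothesis A_incr : forall n, A n < A n.+1.
Hypothesis A_ratio : forall n, A n.+1 < r * A n.

Lemma incr_seq_le m n : (m <= n)%N -> A m <= A n.
Proof.
move/subnK <-; elim: (n - m)%N => [|k IH]; first by rewrite add0n; lra.
by rewrite addSn; have := A_incr (k + m); lra.
Qed.

Lemma incr_seq_ge1 n : 1 <= A n.
Proof. by rewrite -A0; apply: incr_seq_le. Qed.

Fixpoint last_sq_le (c n : nat) : nat :=
  if n is n'.+1 then (if Rle_dec (A n * A n) (A c) then n else last_sq_le c n') else 0%N.

Definition sq_step (c : nat) : nat := last_sq_le c c.

Lemma last_sq_leP c n :
  [/\ (last_sq_le c n <= n)%N, A (last_sq_le c n) * A (last_sq_le c n) <= A c &
      (last_sq_le c n < n)%N -> A c < A (last_sq_le c n).+1 * A (last_sq_le c n).+1].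
Proof.
elim: n => [|n [le_n sq_le next]] /=; first by rewrite A0 Rmult_1_l; split => //; exact: incr_seq_ge1.
case: Rle_dec => [//|not_le] /=; first by split; rewrite ?ltnn.
split => [||lt_n]; [exact: leqW | exact: sq_le |].
move: lt_n; rewrite ltnS leq_eqVlt => /orP [/eqP ->|/next //]; lra.
Qed.

Lemma sq_step_le c : A (sq_step c) * A (sq_step c) <= A c.
Proof. by have [] := last_sq_leP c c. Qed.

Lemma sq_step_ge c : A c <= r * r * (A (sq_step c) * A (sq_step c)).
Proof.
have [le_c sq_le next] := last_sq_leP c c; rewrite /sq_step.
set a := last_sq_le c c in le_c sq_le next *.
have a_ge1 := incr_seq_ge1 a; have c_ge1 := incr_seq_ge1 c.
have r_gt1 : 1 < r by have := A_ratio 0; have := A_incr 0; rewrite A0; lra.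
case: (ltnP a c) => [/next c_lt | c_le].
  by have := A_ratio a; have := incr_seq_ge1 a.+1; nra.
have -> : a = c by apply/eqP; rewrite eqn_leq le_c.
have r2_ge1 : 1 <= r * r by nra.
have : 0 <= (r * r - 1) * (A c * A c) by apply: Rmult_le_pos; nra.
by nra.
Qed.

Lemma sq_step_iter_pow k c : A (iter k sq_step c) ^ (2 ^ k) <= A c.
Proof.
elim: k => [|k IH]; first by rewrite expn0 pow_1 /=; lra.
rewrite iterS expnS -multE pow_mult; apply: Rle_trans IH; apply: pow_incr.
have := sq_step_le (iter k sq_step c); have := incr_seq_ge1 (sq_step (iter k sq_step c)).
by split; nra.
Qed.

Lemma sq_step_iter_bottom m c : 2 < A 1%N -> A c <= 2 ^ (2 ^ m) -> iter m sq_step c = 0%N.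
Proof.
move=> A1_gt2 Ac_le; set x := iter m sq_step c.
have x_le2 : A x <= 2.
  apply: Rnot_lt_le => x_gt2.
  have := pow_lt_pow_l (expn_gt0 2 m) (Rlt_le _ _ Rlt_0_2) x_gt2.
  by have := sq_step_iter_pow m c; rewrite -/x; lra.
case: x x_le2 => [//|x'] x_le2.
by have := incr_seq_le (ltn0Sn x'); lra.
Qed.

End SquaringChain.

Section Logarithms.
Local Open Scope R_scope.

Lemma ln_le_compat x y : 0 < x -> x <= y -> ln x <= ln y.
Proof.
move=> x_gt0 x_le_y; case: (Rle_lt_or_eq_dec x y x_le_y) => [xy|->].
  by left; exact: ln_increasing.
exact: Rle_refl.
Qed.

Lemma ln2_gt0 : 0 < ln (INR 2).
Proof. by rewrite -ln_1; apply: ln_increasing => /=; lra. Qed.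

Lemma plog_ge2 x : 2 <= plog x.
Proof.
rewrite /plog; case: (Rle_dec (INR 4) (Rabs x)) => [x_ge4|x_lt4]; last by rewrite /=; lra.
have ln2 := ln2_gt0.
apply: (Rmult_le_reg_r (ln (INR 2))) => //.
rewrite /Rdiv Rmult_assoc Rinv_l ?Rmult_1_r; last lra.
have -> : 2 * ln (INR 2) = ln (INR 2 ^ 2) by rewrite ln_pow /=; lra.
by apply: ln_le_compat; rewrite /= in x_ge4 *; lra.
Qed.

Lemma ln_le_plog n : (0 < n)%N -> ln (INR n) <= plog (INR n) * ln (INR 2).
Proof.
move=> n_gt0; have n_ge1 : 1 <= INR n by apply: (le_INR 1); apply/leP.
have ln2 := ln2_gt0; rewrite /plog Rabs_right; last lra.
case: (Rle_dec (INR 4) (INR n)) => [n_ge4|n_lt4].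
  by rewrite /Rdiv Rmult_assoc Rinv_l; lra.
have : ln (INR n) <= ln (INR 2 ^ 2) by apply: ln_le_compat; rewrite /= in n_lt4 *; lra.
by rewrite ln_pow /=; lra.
Qed.

Lemma plog_le_of_quadratic N D : (0 < D)%N -> (N <= 24 * (D * D))%N ->
  plog (INR N) <= 7 * plog (INR D).
Proof.
move=> D_gt0 N_le; have ln2 := ln2_gt0; have PD := plog_ge2 (INR D).
have D_ge1 : 1 <= INR D by apply: (le_INR 1); apply/leP.
rewrite {1}/plog Rabs_right; last by have := pos_INR N; lra.
case: (Rle_dec (INR 4) (INR N)) => [N_ge4|N_lt4]; last by rewrite /=; lra.
have lnN : ln (INR N) <= ln (INR 2 ^ 5) + ln (INR D) + ln (INR D).
  rewrite -!ln_mult; try (apply: pow_lt || apply: Rmult_lt_0_compat); rewrite /=; try lra.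
  apply: ln_le_compat; first by rewrite /= in N_ge4; lra.
  have /le_INR : (N <= 24 * (D * D))%coq_nat by apply/leP.
  by rewrite !mult_INR /=; nra.
rewrite ln_pow in lnN; last by rewrite /=; lra.
have five : INR 5 = 5 by rewrite /=; lra.
rewrite five in lnN.
have lnD := ln_le_plog D_gt0.
apply: (Rmult_le_reg_r (ln (INR 2))) => //.
by rewrite /Rdiv Rmult_assoc Rinv_l; nra.
Qed.

Lemma INR_expn m n : INR (m ^ n) = INR m ^ n.
Proof. by elim: n => [|n IH]; rewrite ?expn0 // expnS mult_INR IH. Qed.

Lemma trunc_log2_le_plog D : (0 < D)%N -> INR (trunc_log 2 D) <= plog (INR D).
Proof.
move=> D_gt0; have ln2 := ln2_gt0.
apply: (Rmult_le_reg_r (ln (INR 2))) => //; apply: Rle_trans (ln_le_plog D_gt0).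
rewrite -ln_pow; last by rewrite /=; lra.
apply: ln_le_compat; first by apply: pow_lt => /=; lra.
by rewrite -INR_expn; apply/le_INR/leP/trunc_logP.
Qed.

Lemma chain_length_le D : (0 < D)%N ->
  INR (7 + 3 * trunc_log 2 D) <= 7 * (plog (INR D) * plog (INR D)).
Proof.
move=> D_gt0; have := trunc_log2_le_plog D_gt0; have := plog_ge2 (INR D).
by rewrite plus_INR mult_INR /=; nra.
Qed.

Lemma cycle_length_le_pow D :
  (D.+1 * ((4 * D).+1 * D.+1) <= 2 ^ (7 + 3 * trunc_log 2 D))%N.
Proof.
set k := trunc_log 2 D.
have D_lt : (D < 2 ^ k.+1)%N by apply: trunc_log_ltn.
apply: (@leq_trans (2 ^ k.+1 * (2 ^ 2 * 2 ^ k.+1 * 2 ^ k.+1))).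
  move: (2 ^ k.+1)%N D_lt => E D_lt.
  by apply: leq_mul => //; apply: leq_mul => //; rewrite /=; lia.
by rewrite -!expnD leq_pexp2l //; lia.
Qed.

End Logarithms.

Section PrincipalCycle.
Local Open Scope R_scope.

Variable D : nat.
Hypothesis D_gt0 : (0 < D)%N.
Hypothesis D_nonsquare : ~ (exists n : nat, D = (n * n)%N).

Lemma sqrtD_sqr : sqrtD D * sqrtD D = INR D.
Proof. by rewrite /sqrtD sqrt_sqrt //; apply: pos_INR. Qed.

Lemma INR_D_ge1 : 1 <= INR D.
Proof. by apply: (le_INR 1); apply/leP. Qed.

Lemma sqrtD_ge1 : 1 <= sqrtD D.
Proof. by rewrite -sqrt_1; apply: sqrt_le_1_alt; exact: INR_D_ge1. Qed.

Lemma sqrtD_le_D : sqrtD D <= INR D.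
Proof. by have := sqrtD_sqr; have := sqrtD_ge1; nra. Qed.

Lemma lam_bounds : 1 <= INR (lam D) /\ INR (lam D) < sqrtD D /\ sqrtD D < INR (lam D) + 1.
Proof.
have [sq_le lt_sq] := Nat.sqrt_spec D (Nat.le_0_l _).
have sq_neq : (lam D * lam D)%coq_nat <> D by move=> E; apply: D_nonsquare; exists (lam D).
rewrite /lam in sq_neq *.
have l1 : 1 <= INR (Nat.sqrt D) by apply: (le_INR 1); lia.
have l2 : INR (Nat.sqrt D) * INR (Nat.sqrt D) < INR D by rewrite -mult_INR; apply: lt_INR; lia.
have l3 : INR D < (INR (Nat.sqrt D) + 1) * (INR (Nat.sqrt D) + 1).
  by rewrite -S_INR -mult_INR; apply: lt_INR; lia.
by have := sqrtD_sqr; have := sqrtD_ge1; split; [|split]; nra.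
Qed.

Lemma Itilde_reduced_det : reduced_det D (Itilde D).
Proof.
have [l1 [l2 l3]] := lam_bounds.
split; last exact: fdet_Itilde.
by rewrite /reduced /is_form /fa /fb /fc !mx2E /= Rabs_R1; repeat split; lra.
Qed.

Lemma reduced_right_nbr Q1 S Q2 : reduced_det D Q1 -> right_nbr D Q1 S Q2 -> reduced_det D Q2.
Proof.
move=> [[Q1_form [b_gt0 [b_lt [a_gt a_lt]]]] Q1_det] [mu [-> [mu_gt [mu_lt ->]]]].
split; last by rewrite fdet_congr ?det_nbr_mat.
have det_real : int2R (fb Q1) * int2R (fb Q1) - int2R (fa Q1) * int2R (fc Q1)
                = sqrtD D * sqrtD D.
  by rewrite sqrtD_sqr -int2R_nat -Q1_det /fdet; push_int2R.
rewrite int2RM in mu_gt mu_lt.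
have s_gt0 : 0 < sqrtD D by have := sqrtD_ge1; lra.
have [h1 [h2 [h3 h4]]] := right_nbr_reduced_real s_gt0 det_real b_gt0 b_lt a_gt a_lt
  (int2R_eq0_or_ge1 mu) mu_gt mu_lt.
split; first exact: is_form_congr.
rewrite nbr_mat_congr // /fa /fb !mx2E; push_int2R.
by repeat split.
Qed.

Lemma right_nbr_unique Q S1 Q2 S2 Q3 : right_nbr D Q S1 Q2 -> right_nbr D Q S2 Q3 -> Q2 = Q3.
Proof.
move=> [m1 [-> [gt1 [lt1 ->]]]] [m2 [-> [gt2 [lt2 ->]]]].
rewrite !int2RM in gt1 lt1 gt2 lt2.
have m12 := int2R_eq0_or_ge1 (m1 - m2); rewrite int2RB in m12.
by rewrite (int2R_inj (nbr_mu_unique gt1 lt1 gt2 lt2 m12)).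
Qed.

Lemma reduced_det_bounds Q : reduced_det D Q ->
  [/\ (`|fa Q| < 2 * D)%N, fa Q != 0%R, (0 < fb Q)%R & (`|fb Q| < D)%N].
Proof.
move=> [[_ [b_gt0 [b_lt [a_gt a_lt]]]] _].
have s_le := sqrtD_le_D.
rewrite !Rabs_int2R in a_gt a_lt.
have b_abs : int2R (fb Q) = INR `|fb Q|%N by rewrite -Rabs_int2R Rabs_right //; lra.
rewrite b_abs in b_gt0 b_lt a_gt a_lt.
split.
- by apply/ltP/INR_lt; rewrite mult_INR /=; lra.
- by rewrite -absz_eq0; apply/eqP => a0; rewrite a0 /= in a_gt; lra.
- by apply: int2R_gt0; rewrite b_abs.
- by apply/ltP/INR_lt; lra.
Qed.

Section Cycle.
Variables Qs Ss : nat -> 'M[int]_2.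
Hypothesis cycle : principal_cycle D Qs Ss.

Lemma principal_cycle_form n :
  Qs n = principal_form D (Lmat Ss n) /\ (\det (Lmat Ss n) = 1)%R.
Proof.
case: cycle => Q0 step; elim: n => [|n [Qn Ln]] /=.
  by rewrite /principal_form trmx1 mul1mx mulmx1 Q0 det1.
have [mu [S_def [_ [_ ->]]]] := step n.
by rewrite Qn S_def det_mulmx Ln det_nbr_mat mulr1 /principal_form trmx_mul !mulmxA.
Qed.

Lemma principal_cycle_reduced n : reduced_det D (Qs n).
Proof.
case: cycle => Q0 step; elim: n => [|n IH]; first by rewrite Q0; exact: Itilde_reduced_det.
exact: reduced_right_nbr IH (step n).
Qed.

Lemma principal_cycle_shift u v : Qs u = Qs v -> forall n, Qs (u + n)%N = Qs (v + n)%N.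
Proof.
case: cycle => _ step Quv; elim => [|n IH]; first by rewrite !addn0.
rewrite !addnS; apply: right_nbr_unique (step (u + n)%N) _.
by rewrite IH; exact: step.
Qed.

Lemma least_period_injective q u v : least_period Qs q ->
  (u < v)%N -> (v < q)%N -> Qs u <> Qs v.
Proof.
move=> [q_gt0 [periodic minimal]] uv vq Quv.
apply: (minimal (v - u)%N); [lia | lia | move=> n].
have shift := principal_cycle_shift Quv (n + q - u).
rewrite -(periodic n) -(periodic (n + (v - u))%N).
have -> : (n + (v - u) + q = v + (n + q - u))%N by lia.
by rewrite -shift; congr Qs; lia.
Qed.

(* Pigeonhole: a reduced form of determinant D is determined by (a, b), |a| < 2D, 0 < b < D. *)
Lemma least_period_le q : least_period Qs q -> (q <= (4 * D).+1 * D.+1)%N.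
Proof.
move=> period.
pose code (i : 'I_q) : 'I_(4 * D).+1 * 'I_D.+1 :=
  (inord `|(fa (Qs i) + Posz (2 * D)%N)%R|, inord `|fb (Qs i)|).
suff /leq_card : injective code by rewrite card_prod !card_ord.
move=> i k /(congr1 (fun x => (val x.1, val x.2))) /=.
have [ai_lt ai_neq0 bi_gt0 bi_lt] := reduced_det_bounds (principal_cycle_reduced i).
have [ak_lt _ bk_gt0 bk_lt] := reduced_det_bounds (principal_cycle_reduced k).
rewrite !inordK; try lia.
case=> Ea Eb; apply: val_inj => /=.
have Qik : Qs i = Qs k.
  have [[fi _] deti] := principal_cycle_reduced i.
  have [[fk _] detk] := principal_cycle_reduced k.
  by apply: form_eq => //; [rewrite deti detk | lia | lia].
case: (ltngtP i k) => // ik.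
- by case: (least_period_injective period ik (ltn_ord k)).
- by case: (least_period_injective period ik (ltn_ord i)).
Qed.

End Cycle.

(* The two real embeddings of [v0 + v1 (lam + sqrt D)] in Z[sqrt D]. *)
Definition emb (v : 'cV[int]_2) : R :=
  int2R (v ord0 ord0) + int2R (v ord_max ord0) * (INR (lam D) + sqrtD D).
Definition emb' (v : 'cV[int]_2) : R :=
  int2R (v ord0 ord0) + int2R (v ord_max ord0) * (INR (lam D) - sqrtD D).

Lemma principal_form_conjugates (L : 'M[int]_2) : (\det L = 1)%R ->
  [/\ int2R (fa (principal_form D L)) = emb (col ord0 L) * emb' (col ord0 L),
      int2R (fb (principal_form D L)) + sqrtD D = emb' (col ord0 L) * emb (col ord_max L) &
      int2R (fb (principal_form D L)) - sqrtD D = emb (col ord0 L) * emb' (col ord_max L)].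
Proof.
rewrite {1}(mx2_eta L) det_mx2 => /(congr1 int2R); push_int2R => /= det_real.
split.
- rewrite fa_principal_form /Itilde qf_mx2 /emb /emb' !mxE; push_int2R.
  by rewrite -sqrtD_sqr /=; ring.
- rewrite -[sqrtD D]Rmult_1_r -det_real fb_principal_form /emb /emb' !mxE; push_int2R.
  by rewrite -sqrtD_sqr; ring.
- rewrite -[sqrtD D]Rmult_1_r -det_real fb_principal_form /emb /emb' !mxE; push_int2R.
  by rewrite -sqrtD_sqr; ring.
Qed.

Definition emb_controlled (L : 'M[int]_2) (A : R) : Prop :=
  forall j : 'I_2,
    Rabs (emb (col j L)) <= 2 * sqrtD D * A /\ Rabs (emb' (col j L)) * A <= 2 * sqrtD D.

Lemma reduced_principal_form_emb (L : 'M[int]_2) :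
  (\det L = 1)%R -> reduced_det D (principal_form D L) ->
  [/\ Rabs (emb (col ord0 L)) < Rabs (emb (col ord_max L)),
      Rabs (emb (col ord_max L)) < 2 * sqrtD D * Rabs (emb (col ord0 L)) &
      emb_controlled L (Rabs (emb (col ord0 L)))].
Proof.
move=> L_det [[_ [b_gt0 [b_lt [a_gt a_lt]]]] _].
have [Ea Ebp Ebm] := principal_form_conjugates L_det.
have a_ge1 : 1 <= Rabs (int2R (fa (principal_form D L))).
  by case: (int2R_eq0_or_ge1 (fa (principal_form D L))) => // a0; rewrite a0 Rabs_R0 in a_gt; lra.
have [al_lt be_lt be'_lt al_al'] :=
  conjugate_bounds Ea Ebp Ebm b_gt0 b_lt a_gt a_lt a_ge1.
have s_ge1 := sqrtD_ge1.
have := Rabs_pos (emb (col ord0 L)); have := Rabs_pos (emb' (col ord_max L)).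
split=> // j; have [->|->] := ord2P j; split; nra.
Qed.

Lemma emb_B0_zvec (u v : 'cV[int]_2) :
  emb (B0 D *m zvec u v) = emb u * emb v /\ emb' (B0 D *m zvec u v) = emb' u * emb' v.
Proof.
rewrite (cv2_eta u) (cv2_eta v) zvec_cv2 B0_mulv /emb /emb' !cvE; push_int2R.
by rewrite -sqrtD_sqr /=; split; ring.
Qed.

(* Cramer's rule for [L x = w], read through both embeddings. *)
Lemma adj_mulmx_emb (L : 'M[int]_2) (w : 'cV[int]_2) :
  int2R ((\adj L *m w) ord0 ord0) * (2 * sqrtD D) =
    emb' w * emb (col ord_max L) - emb w * emb' (col ord_max L) /\
  int2R ((\adj L *m w) ord_max ord0) * (2 * sqrtD D) =
    emb w * emb' (col ord0 L) - emb' w * emb (col ord0 L).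
Proof.
rewrite [in \adj L](mx2_eta L) adj_mx2 (cv2_eta w) mx2_mulv /emb /emb' !mxE /=.
by push_int2R; split; ring.
Qed.

Lemma compose_mx_entry La Lb Lc i j : exists a b : 'I_2,
  compose_mx D La Lb Lc i j = (\adj Lc *m (B0 D *m zvec (col a La) (col b Lb))) i ord0.
Proof.
exists (inord (j %/ 2)), (inord (j %% 2)); rewrite !mxE; apply: eq_bigr => k _.
by rewrite !mxE; congr (_ * _)%R; apply: eq_bigr => r _; rewrite !mxE.
Qed.

Lemma absz_le_of_scaled z X :
  Rabs X <= 48 * sqrtD D * sqrtD D * sqrtD D * sqrtD D * sqrtD D ->
  int2R z * (2 * sqrtD D) = X -> (`|z| <= 24 * (D * D))%N.
Proof.
have s_ge1 := sqrtD_ge1.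
move=> X_le X_def; apply: int2R_abs_le; rewrite !mult_INR -sqrtD_sqr INR_IZR_INZ /=.
rewrite -X_def Rabs_mult (Rabs_right (2 * sqrtD D)) in X_le; last by lra.
apply: (Rmult_le_reg_r (2 * sqrtD D)); first by lra.
by rewrite [X in _ <= X](_ : _ = 48 * sqrtD D * sqrtD D * sqrtD D * sqrtD D * sqrtD D);
  last ring.
Qed.

Lemma compose_mx_normM La Lb Lc (Aa Ab Ac : R) : 0 < Aa -> 0 < Ab -> 0 < Ac ->
  emb_controlled La Aa -> emb_controlled Lb Ab -> emb_controlled Lc Ac ->
  Aa * Ab <= 2 * sqrtD D * Ac -> Ac <= 4 * sqrtD D * sqrtD D * (Aa * Ab) ->
  (normM (compose_mx D La Lb Lc) <= 24 * (D * D))%N.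
Proof.
move=> Aa_gt0 Ab_gt0 Ac_gt0 La_ctl Lb_ctl Lc_ctl small large.
rewrite /normM; apply/bigmax_leqP => i _; apply/bigmax_leqP => j _.
have [a [b ->]] := compose_mx_entry La Lb Lc i j.
set w := B0 D *m _.
have [w_emb w_emb'] := emb_B0_zvec (col a La) (col b Lb).
have [ua u'a] := La_ctl a; have [vb v'b] := Lb_ctl b.
have := Rabs_pos (emb (col a La)); have := Rabs_pos (emb' (col a La)).
have := Rabs_pos (emb (col b Lb)); have := Rabs_pos (emb' (col b Lb)).
move=> ? ? ? ?.
have x_le : Rabs (emb w) <= 4 * sqrtD D * sqrtD D * (Aa * Ab).
  by rewrite w_emb Rabs_mult; have := Rmult_le_compat _ _ _ _ _ _ ua vb; nra.
have x'_le : Rabs (emb' w) * (Aa * Ab) <= 4 * sqrtD D * sqrtD D.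
  rewrite w_emb' Rabs_mult.
  by have := Rmult_le_compat _ _ _ _ _ _ u'a v'b; nra.
have s_ge1 := sqrtD_ge1; have P_gt0 : 0 < Aa * Ab by nra.
have [row0 row1] := adj_mulmx_emb Lc w.
have [c0 c0'] := Lc_ctl ord0; have [c1 c1'] := Lc_ctl ord_max.
have [->|->] := ord2P i.
- exact: absz_le_of_scaled (cross_bound s_ge1 P_gt0 Ac_gt0 x_le x'_le c1 c1' small large) row0.
- apply: absz_le_of_scaled row1; rewrite -Rabs_Ropp.
  have -> : - (emb w * emb' (col ord0 Lc) - emb' w * emb (col ord0 Lc)) =
            emb' w * emb (col ord0 Lc) - emb w * emb' (col ord0 Lc) by ring.
  exact: cross_bound s_ge1 P_gt0 Ac_gt0 x_le x'_le c0 c0' small large.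
Qed.

Section CycleGrowth.
Variables Qs Ss : nat -> 'M[int]_2.
Hypothesis cycle : principal_cycle D Qs Ss.

Let A n := Rabs (emb (col ord0 (Lmat Ss n))).

Lemma cycle_emb_succ n : A n.+1 = Rabs (emb (col ord_max (Lmat Ss n))).
Proof.
have [mu [S_def _]] := cycle.2 n.
rewrite /A /= S_def col0_mul_nbr_mat -Rabs_Ropp /emb !mxE; push_int2R.
by congr Rabs; ring.
Qed.

Lemma cycle_growth n :
  [/\ A n < A n.+1, A n.+1 < 2 * sqrtD D * A n & emb_controlled (Lmat Ss n) (A n)].
Proof.
have [Qn Ln] := principal_cycle_form cycle n.
have := principal_cycle_reduced cycle n; rewrite Qn => red.
by rewrite cycle_emb_succ; apply: reduced_principal_form_emb.
Qed.

Lemma cycle_emb_init : A 0 = 1 /\ 2 < A 1.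
Proof.
have [l1 [l2 _]] := lam_bounds.
rewrite cycle_emb_succ /A /= /emb !mxE /= Rmult_0_l Rmult_1_l Rplus_0_l Rplus_0_r Rabs_R1.
by split => //; rewrite Rabs_right; lra.
Qed.

Lemma cycle_emb_ge1 n : 1 <= A n.
Proof.
have [A0 _] := cycle_emb_init.
by apply: (incr_seq_ge1 A0) => k; have [] := cycle_growth k.
Qed.

Lemma cycle_emb_le_tower p j : least_period Qs (2 * p) -> (j <= 2 * p)%N ->
  A j <= 2 ^ (2 ^ (7 + 3 * trunc_log 2 D)).
Proof.
move=> period j_le.
have [A0 _] := cycle_emb_init.
have two_s : 2 * sqrtD D <= 2 ^ D.+1.
  have : INR D <= INR 2 ^ D by rewrite -INR_expn; apply/le_INR/leP/ltnW/ltn_expl.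
  rewrite (_ : INR 2 = 2); last by rewrite /=; lra.
  by have := sqrtD_le_D; rewrite -tech_pow_Rmult; lra.
have A_le_pow n : A n <= (2 ^ D.+1) ^ n.
  elim: n => [|n IH]; first by rewrite A0 /=; lra.
  have [_ A_next _] := cycle_growth n; have := Rabs_pos (emb (col ord0 (Lmat Ss n))).
  rewrite -[(_ ^ D.+1) ^ n.+1]tech_pow_Rmult => A_ge0.
  have : 2 * sqrtD D * A n <= 2 ^ D.+1 * (2 ^ D.+1) ^ n.
    by apply: Rmult_le_compat => //; have := sqrtD_ge1; lra.
  by lra.
apply: Rle_trans (A_le_pow j) _; rewrite -pow_mult; apply: Rle_pow; first lra.
apply/leP; apply: leq_trans (cycle_length_le_pow D); rewrite multE.
by apply: leq_mul => //; apply: leq_trans j_le (least_period_le cycle period).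
Qed.

Lemma cycle_square_step a c :
  A a * A a <= A c <= 2 * sqrtD D * (2 * sqrtD D) * (A a * A a) ->
  let B := compose_mx D (Lmat Ss a) (Lmat Ss a) (Lmat Ss c) in
  [/\ composition (Qs a) (Qs a) (Qs c) B,
      (Lmat Ss c *m B = B0 D *m kron (Lmat Ss a) (Lmat Ss a))%R &
      (normM B <= 24 * (D * D))%N].
Proof.
move=> [small large] B.
have [Qa La] := principal_cycle_form cycle a; have [Qc Lc] := principal_cycle_form cycle c.
have [_ fa_neq0 _ _] := reduced_det_bounds (principal_cycle_reduced cycle a).
have [_ _ ctl_a] := cycle_growth a; have [_ _ ctl_c] := cycle_growth c.
have Aa_gt0 : 0 < A a by have := cycle_emb_ge1 a; lra.
have Ac_gt0 : 0 < A c by have := cycle_emb_ge1 c; lra.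
split.
- by rewrite Qa Qc; apply: principal_composition => //; rewrite -Qa.
- exact: compose_mxV.
- apply: (compose_mx_normM Aa_gt0 Aa_gt0 Ac_gt0 ctl_a ctl_a ctl_c); last by lra.
  by have := sqrtD_ge1; nra.
Qed.

Lemma cycle_typeII (Qt V : nat -> 'M[int]_2) k a c :
  Qt k = Qs a -> V k = Lmat Ss a -> Qt k.+1 = Qs c -> V k.+1 = Lmat Ss c ->
  A a * A a <= A c <= 2 * sqrtD D * (2 * sqrtD D) * (A a * A a) ->
  typeII 7 D Qt V k.
Proof.
move=> Qk Vk Qk1 Vk1 /cycle_square_step [composed VB normB].
exists k, k, (compose_mx D (Lmat Ss a) (Lmat Ss a) (Lmat Ss c)).
rewrite Qk Vk Qk1 Vk1; do 4 (split => //).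
exact: plog_le_of_quadratic.
Qed.

End CycleGrowth.

End PrincipalCycle.

Theorem lemma6p4 :
  exists C : R,
  forall (D : nat), (0 < D)%N -> ~ (exists n : nat, D = (n * n)%N) ->
  forall (Qs Ss : nat -> 'M[int]_2) (p : nat),
    principal_cycle D Qs Ss -> least_period Qs (2 * p)%N ->
  forall j : nat, (1 <= j)%N -> (j <= 2 * p)%N ->
  exists (K : nat) (Qt V : nat -> 'M[int]_2),
    (forall k, (k <= K)%N -> reduced_det D (Qt k)) /\
    Qt 0%N = Itilde D /\ V 0%N = 1%:M /\
    (forall k, (k < K)%N -> typeI D Qt V k \/ typeII C D Qt V k) /\
    Qt K = Qs j /\ V K = Lmat Ss j /\
    Rle (INR K) (Rmult C (Rmult (plog (INR D)) (plog (INR D)))).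
Proof.
exists 7%Re => D D_gt0 D_nonsq Qs Ss p cycle period j _ j_le.
pose A n := Rabs (emb D (col ord0 (Lmat Ss n))).
have [A0 A1_gt2] : A 0%N = 1%Re /\ (2 < A 1%N)%Re := cycle_emb_init D_gt0 D_nonsq cycle.
have A_incr n : (A n < A n.+1)%Re by have [] := cycle_growth D_gt0 D_nonsq cycle n.
have A_ratio n : (A n.+1 < 2 * sqrtD D * A n)%Re by have [] := cycle_growth D_gt0 D_nonsq cycle n.
pose m := (7 + 3 * trunc_log 2 D)%N.
pose pk i := iter (m - i) (sq_step A) j.
have pk0 : pk 0%N = 0%N.
  rewrite /pk subn0.
  apply: (sq_step_iter_bottom A0 A_incr A1_gt2).
  exact: (cycle_emb_le_tower D_gt0 D_nonsq cycle period j_le).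
have pkm : pk m = j by rewrite /pk subnn.
exists m, (fun i => Qs (pk i)), (fun i => Lmat Ss (pk i)); cbv beta; rewrite pk0 pkm.
split=> [k _|]; first exact: (principal_cycle_reduced D_gt0 D_nonsq cycle (pk k)).
split; first by case: cycle.
split; first done.
split=> [i i_lt_m|]; last by split; [done | split; [done | exact: chain_length_le]].
right; apply: (cycle_typeII D_gt0 D_nonsq cycle (a := pk i) (c := pk i.+1)) => //.
have -> : pk i = sq_step A (pk i.+1) by rewrite /pk -iterS subnSK.
exact: conj (sq_step_le A0 A_incr _) (sq_step_ge A0 A_incr A_ratio _).
Qed.
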